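(* Let $a,d\in\mathbb{N}$ and $n,m\ge 1$. Consider the Pólya–Eggenberger urn with ball transition matrix $\begin{pmatrix}-a&0\\0&-d\end{pmatrix}$ started with $a n$ white and $d m$ black balls, and let $Y_{an,dm}$ be the number of white balls remaining when the process stops. Then for $0\le k\le n$, \[ \mathbb{P}\{Y_{an,dm}=ak\}=\sum_{\ell=1}^{m}(-1)^{\ell-1}\frac{\binom{m}{\ell}\binom{k-1+\frac{\ell d}{a}}{k}}{\binom{n+\frac{\ell d}{a}}{n}}=\sum_{\ell=k}^{n}(-1)^{\ell-k}\frac{\binom{n}{\ell}\binom{\ell}{k}}{\binom{m+\frac{\ell a}{d}}{m}}. \] Moreover, the normalized random variable $\hat Y_{an,dm}=Y_{an,dm}/a$ satisfies, for every integer $s\ge 1$, \[ \mathbb{E}\big(\hat Y_{an,dm}^{\underline{s}}\big)=\frac{n^{\underline{s}}}{\binom{m+\frac{as}{d}}{m}},\qquad \mathbb{E}\big(\hat Y_{an,dm}^{s}\big)=\sum_{j=0}^{s}{s\brace j}\frac{n^{\underline{j}}}{\binom{m+\frac{aj}{d}}{m}}. \]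
   Context: The urn: at each step one ball is drawn uniformly at random among all balls present; if it is white, the number of white balls decreases by $a$; if it is black, the number of black balls decreases by $d$ (so from $a n'$ white and $d m'$ black balls, a white ball is drawn with probability $an'/(an'+dm')$). The process stops as soon as the urn contains no white or no black balls; $Y_{an,dm}$ is the number of white balls at that time (so it is $0$ if whites are exhausted first). For real $x$ and integer $k\ge 0$, $x^{\underline{k}}=x(x-1)\cdots(x-k+1)$ denotes the falling factorial and $\binom{x}{k}=x^{\underline{k}}/k!$. ${s\brace j}$ denotes the Stirling numbers of the second kind. *)

From mathcomp Require Import all_boot all_order all_algebra.
Set Implicit Arguments. Unset Strict Implicit. Unset Printing Implicit Defensive.
Import Order.TTheory GRing.Theory Num.Theory.
Local Open Scope ring_scope.

Definition ffact (R : realFieldType) (x : R) (k : nat) : R :=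
  \prod_(i < k) (x - i%:R).

Definition gbinom (R : realFieldType) (x : R) (k : nat) : R :=
  ffact x k / (k`!)%:R.

Fixpoint stirling2 (s j : nat) : nat :=
  match s, j with
  | 0, 0 => 1
  | 0, _ => 0
  | _.+1, 0 => 0
  | s'.+1, j'.+1 => j'.+1 * stirling2 s' j'.+1 + stirling2 s' j'
  end%N.

(* Law of the urn with ball transition matrix diag(-a,-d).
   urnP a d n m k = P{ Y_{a n, d m} = a k }, i.e. the probability that,
   starting from a*n white and d*m black balls, the process stops with
   exactly a*k white balls.  One step from (a n', d m') with n',m' >= 1:
   with prob. a n'/(a n' + d m') a white ball is drawn (n' decreases by 1),
   otherwise a black ball is drawn (m' decreases by 1). *)
Fixpoint urnP (R : realFieldType) (a d : nat) (n m k : nat) {struct n} : R :=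
  match n with
  | 0 => (k == 0)%:R
  | n'.+1 =>
    (fix urnPm (m : nat) : R :=
       match m with
       | 0 => (k == n)%:R
       | m'.+1 =>
         (a * n)%:R / (a * n + d * m)%:R * urnP R a d n' m k
         + (d * m)%:R / (a * n + d * m)%:R * urnPm m'
       end) m
  end.

Definition urnE (R : realFieldType) (a d n m : nat) (f : nat -> R) : R :=
  \sum_(k < n.+1) urnP R a d n m k * f k.

From mathcomp Require Import all_boot all_order all_algebra.
From mathcomp Require Import ring lra zify.
Import Order.TTheory GRing.Theory Num.Theory.
Local Open Scope ring_scope.

(** Conditioning on the first draw, P{Y = a k} and every expectation E f(Y/a),
    seen as functions G(n, m) of the initial urn, satisfy
      (a n + d m) G(n, m) = a n G(n-1, m) + d m G(n, m-1),
    and are determined by it together with their values at n = 0 and m = 0.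
    A quotient u(n) / binom(m + c, m) solves this recurrence as soon as
    d c = a s and (n+1) u(n) = (n+1-s) u(n+1); the falling factorials of n and
    the binomials binom(n, l) are such u.  The recurrence is symmetric in
    (a, n) <-> (d, m), so the same holds with the roles exchanged.  Hence the
    three formulas solve the recurrence, and their boundary values are settled
    by alternating binomial sums.  Power moments follow from the factorial
    ones through the Stirling expansion of x^s. *)

Section UrnLaw.
Variable R : realFieldType.
Implicit Types (x c : R) (a d n m k l s : nat).

Lemma ffact0 x : ffact x 0 = 1.
Proof. by rewrite /ffact big_ord0. Qed.

Lemma ffactS x s : ffact x s.+1 = x * ffact (x - 1) s.
Proof.
rewrite /ffact big_ord_recl /= subr0; congr (_ * _).
by apply: eq_bigr => i _; rewrite /bump /= -natr1; ring.
Qed.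

Lemma ffactSr x s : ffact x s.+1 = ffact x s * (x - s%:R).
Proof. by rewrite /ffact big_ord_recr. Qed.

Lemma ffact0S s : ffact (0 : R) s.+1 = 0.
Proof. by rewrite ffactS mul0r. Qed.

Lemma ffact_shift x s : (x + 1) * ffact x s = (x + 1 - s%:R) * ffact (x + 1) s.
Proof.
case: s => [|s]; first by rewrite !ffact0 subr0.
by rewrite [ffact (x + 1) _]ffactS addrK ffactSr -natr1; ring.
Qed.

Lemma gbinom0 x : gbinom x 0 = 1.
Proof. by rewrite /gbinom ffact0 fact0 divr1. Qed.

Lemma gbinomS x s : gbinom x s.+1 = x / s.+1%:R * gbinom (x - 1) s.
Proof. by rewrite /gbinom ffactS factS natrM invfM; ring. Qed.

Lemma gbinomSr x s : gbinom x s.+1 = gbinom x s * (x - s%:R) / s.+1%:R.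
Proof. by rewrite /gbinom ffactSr factS natrM invfM; ring. Qed.

Lemma gbinom_nn m : gbinom (m%:R : R) m = 1.
Proof.
elim: m => [|m IHm]; first exact: gbinom0.
by rewrite gbinomS -natr1 addrK IHm mulr1 natr1 divff ?pnatr_eq0.
Qed.

Lemma gbinom_shift_gt0 m c : 0 <= c -> 0 < gbinom (m%:R + c) m.
Proof.
move=> c0; rewrite /gbinom divr_gt0 ?ltr0n ?fact_gt0 //.
apply: prodr_gt0 => i _; have : (i%:R : R) < m%:R by rewrite ltr_nat.
lra.
Qed.

Lemma alt_sum_bin n : \sum_(i < n.+1) (-1) ^+ i * 'C(n, i)%:R = (n == 0)%:R :> R.
Proof.
rewrite -[RHS]expr0n -[X in X ^+ _](addNr 1) exprD1n.
by apply: eq_bigr => i _; rewrite mulr_natr.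
Qed.

Lemma alt_sum_bin1 m :
  \sum_(1 <= l < m.+1) (-1) ^+ (l - 1) * 'C(m, l)%:R = 1 - (m == 0)%:R :> R.
Proof.
rewrite -alt_sum_bin big_ord_recl big_add1 big_mkord /= expr0 bin0 mulr1 opprD addNKr.
by rewrite -sumrN; apply: eq_bigr => i _; rewrite /bump /= subn1 exprS; ring.
Qed.

Lemma mul_bin_trinomial n l k : (k <= l)%N ->
  ('C(n, l) * 'C(l, k) = 'C(n, k) * 'C(n - k, l - k))%N.
Proof.
move=> kl; have [ln|nl] := ltnP n l.
  rewrite bin_small // mul0n; have [nk|kn] := ltnP n k; first by rewrite bin_small.
  by rewrite (@bin_small (n - k)) ?muln0 //; lia.
have kn := leq_trans kl nl.
have fact_pos : (0 < k`! * (l - k)`! * (n - l)`!)%N by rewrite !muln_gt0 !fact_gt0.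
apply/eqP; rewrite -(eqn_pmul2r fact_pos); apply/eqP.
have := bin_fact (leq_sub2r k nl); rewrite (_ : n - k - (l - k) = n - l)%N; last by lia.
move=> Enk; transitivity n`!; first by rewrite -(bin_fact nl) -(bin_fact kl); ring.
by rewrite -(bin_fact kn) -Enk; ring.
Qed.

Lemma alt_sum_bin_bin n k :
  \sum_(k <= l < n.+1) (-1) ^+ (l - k) * ('C(n, l)%:R * 'C(l, k)%:R)
    = (k == n)%:R :> R.
Proof.
have [nk|kn] := ltnP n k.
  by rewrite big_geq // (gtn_eqF nk).
rewrite -{1}[k]add0n big_addn (_ : n.+1 - k = (n - k).+1)%N; last by lia.
rewrite (eq_bigr (fun j => 'C(n, k)%:R * ((-1) ^+ j * 'C(n - k, j)%:R))); last first.
  move=> j _; rewrite addnK -natrM mul_bin_trinomial ?leq_addl // addnK natrM.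
  by rewrite mulrCA.
rewrite -mulr_sumr big_mkord alt_sum_bin subn_eq0 eqn_leq kn /=.
by case: leqP => nk; rewrite ?mulr0 // (_ : k = n) ?binn ?mul1r //; lia.
Qed.

Lemma natr_mul_bin_down n l :
  n.+1%:R * 'C(n, l)%:R = (n.+1%:R - l%:R) * 'C(n.+1, l)%:R :> R.
Proof.
have [ln|nl] := leqP l n.+1; last by rewrite !bin_small ?mulr0 // ltnW.
by rewrite -natrB // -!natrM (mul_bin_down n.+1 l).
Qed.

Lemma natr_mul_bin_diag m l :
  l.+1%:R * 'C(m.+1, l.+1)%:R = m.+1%:R * 'C(m, l)%:R :> R.
Proof. by rewrite -!natrM (mul_bin_diag m.+1 l). Qed.

Definition urn_rec a d (G : nat -> nat -> R) := forall n m,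
  (a * n.+1 + d * m.+1)%:R * G n.+1 m.+1
    = (a * n.+1)%:R * G n m.+1 + (d * m.+1)%:R * G n.+1 m.

Lemma urn_rec_unique a d (G U : nat -> nat -> R) : (0 < a)%N ->
  urn_rec a d G -> urn_rec a d U ->
  (forall m, G 0%N m = U 0%N m) -> (forall n, G n 0%N = U n 0%N) ->
  forall n m, G n m = U n m.
Proof.
move=> a_gt0 recG recU G0m Gn0; elim=> [|n IHn] // m; elim: m => [|m IHm] //.
have nz : (a * n.+1 + d * m.+1)%:R != 0 :> R.
  by rewrite pnatr_eq0 -lt0n ltn_addr // muln_gt0 a_gt0.
by apply: (mulfI nz); rewrite recG recU IHn IHm.
Qed.

Lemma urn_rec_swap a d (G : nat -> nat -> R) :
  urn_rec a d G -> urn_rec d a (fun n m => G m n).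
Proof. by move=> recG n m; rewrite addnC recG addrC. Qed.

Lemma urn_rec_mulr a d c (G : nat -> nat -> R) :
  urn_rec a d G -> urn_rec a d (fun n m => G n m * c).
Proof. by move=> recG n m; rewrite !mulrA -mulrDl recG. Qed.

Lemma sum_widen_vanishing (F : nat -> R) b n N : (n <= N)%N ->
  (forall i, (n < i)%N -> F i = 0) ->
  \sum_(b <= i < n.+1) F i = \sum_(b <= i < N.+1) F i.
Proof.
move=> nN F0; rewrite (big_nat_widen _ _ _ _ _ (nN : n.+1 <= N.+1)%N) big_mkcond /=.
by apply: eq_bigr => i _; case: ltnP => // ni; rewrite F0.
Qed.

Lemma urn_rec_sum a d b (T : nat -> nat -> nat -> R) :
  (forall i, urn_rec a d (T i)) -> (forall i n m, (n < i)%N -> T i n m = 0) ->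
  urn_rec a d (fun n m => \sum_(b <= i < n.+1) T i n m).
Proof.
move=> recT T0 n m /=.
rewrite (@sum_widen_vanishing (fun i => T i n m.+1) b n n.+1) // => [|i]; last exact: T0.
by rewrite !mulr_sumr -big_split; apply: eq_bigr => i _; rewrite recT.
Qed.

Lemma urn_rec_quotient a d s c (u : nat -> R) : 0 <= c ->
  d%:R * c = (a * s)%:R ->
  (forall n, n.+1%:R * u n = (n.+1%:R - s%:R) * u n.+1) ->
  urn_rec a d (fun n m => u n / gbinom (m%:R + c) m).
Proof.
move=> c_ge0 dc u_shift n m /=.
rewrite gbinomS (_ : m.+1%:R + c - 1 = m%:R + c); last by rewrite -natr1; ring.
have := @gbinom_shift_gt0 m _ c_ge0.
set g := gbinom _ _ => g_gt0.
have mc_gt0 : 0 < m.+1%:R + c by rewrite ltr_pwDl.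
have -> : u n = (n.+1%:R - s%:R) * u n.+1 / n.+1%:R.
  by rewrite -u_shift mulrC mulKf ?pnatr_eq0.
have -> : (a * n.+1 + d * m.+1)%:R = a%:R * (n.+1%:R - s%:R) + d%:R * (m.+1%:R + c) :> R.
  by rewrite [d%:R * _]mulrDr dc !natrD !natrM; ring.
rewrite !natrM; field.
by rewrite (gt_eqF g_gt0) !(addrC 1) !natr1 (gt_eqF mc_gt0) !pnatr_eq0.
Qed.

Lemma urnP0m a d m k : urnP R a d 0 m k = (k == 0)%:R.
Proof. by []. Qed.

Lemma urnPn0 a d n k : urnP R a d n 0 k = (k == n)%:R.
Proof. by case: n. Qed.

Lemma urnPSS a d n m k : urnP R a d n.+1 m.+1 k =
  (a * n.+1)%:R / (a * n.+1 + d * m.+1)%:R * urnP R a d n m.+1 k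
  + (d * m.+1)%:R / (a * n.+1 + d * m.+1)%:R * urnP R a d n.+1 m k.
Proof. by []. Qed.

Lemma urn_rec_urnP a d k : (0 < a)%N -> urn_rec a d (fun n m => urnP R a d n m k).
Proof.
move=> a_gt0 n m; have nz : (a * n.+1 + d * m.+1)%:R != 0 :> R.
  by rewrite pnatr_eq0 -lt0n ltn_addr // muln_gt0 a_gt0.
rewrite urnPSS; move: nz; set X := (a * n.+1 + d * m.+1)%:R => nz.
by clearbody X; field.
Qed.

Lemma urnP_small a d n m k : (n < k)%N -> urnP R a d n m k = 0.
Proof.
elim: n m => [|n IHn] m nk; first by rewrite urnP0m gtn_eqF.
elim: m => [|m IHm]; first by rewrite urnPn0 gtn_eqF.
by rewrite urnPSS IHn ?IHm ?mulr0 ?addr0 // ltnW.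
Qed.

Lemma urnE0m a d m (f : nat -> R) : urnE a d 0 m f = f 0%N.
Proof. by rewrite /urnE big_ord1 urnP0m mul1r. Qed.

Lemma urnEn0 a d n (f : nat -> R) : urnE a d n 0 f = f n.
Proof.
rewrite /urnE (bigD1 ord_max) //= urnPn0 eqxx mul1r big1 ?addr0 // => k.
by rewrite urnPn0 -val_eqE /= => /negbTE->; rewrite mul0r.
Qed.

Lemma urn_rec_urnE a d (f : nat -> R) : (0 < a)%N ->
  urn_rec a d (fun n m => urnE a d n m f).
Proof.
move=> a_gt0.
have rec_sum : urn_rec a d (fun n m => \sum_(0 <= k < n.+1) urnP R a d n m k * f k).
  apply: urn_rec_sum => [k|k n m nk]; first exact/urn_rec_mulr/urn_rec_urnP.
  by rewrite urnP_small ?mul0r.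
by move=> n m; have := rec_sum n m; rewrite /urnE /= !big_mkord.
Qed.

Lemma urnE_ffact a d s n m : (0 < a)%N -> (0 < d)%N -> (0 < s)%N ->
  urnE a d n m (fun y => ffact (y%:R : R) s)
    = ffact (n%:R : R) s / gbinom (m%:R + (a * s)%:R / d%:R) m.
Proof.
move=> a_gt0 d_gt0 s_gt0; symmetry; move: n m.
apply: (@urn_rec_unique a d) => //; last 3 first.
- exact: urn_rec_urnE.
- by move=> m; rewrite urnE0m; case: s s_gt0 => // s _; rewrite ffact0S mul0r.
- by move=> n; rewrite urnEn0 gbinom0 divr1.
apply: (@urn_rec_quotient a d s).
- by rewrite divr_ge0.
- by rewrite mulrC divfK // pnatr_eq0 -lt0n.
- by move=> n; rewrite -!natr1 ffact_shift.
Qed.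

Lemma stirling2_small s j : (s < j)%N -> stirling2 s j = 0%N.
Proof. by elim: s j => [|s IHs] [|j] //= sj; rewrite !IHs ?muln0 // ltnW. Qed.

Lemma expr_stirling2 x s :
  x ^+ s = \sum_(j < s.+1) (stirling2 s j)%:R * ffact x j.
Proof.
elim: s => [|s IHs]; first by rewrite big_ord1 ffact0 mulr1.
have mul_ffact j : x * ffact x j = ffact x j.+1 + j%:R * ffact x j.
  by rewrite ffactSr; ring.
rewrite exprS IHs mulr_sumr.
under eq_bigr => j _ do rewrite mulrCA mul_ffact mulrDr.
rewrite big_split /= [RHS]big_ord_recl /= mul0r add0r addrC.
rewrite [RHS](eq_bigr (fun j : 'I_s.+1 => (j.+1 * stirling2 s j.+1)%:R * ffact x j.+1
  + (stirling2 s j)%:R * ffact x j.+1)) => [|j _]; last by rewrite natrD mulrDl.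
rewrite big_split /=; congr (_ + _).
rewrite big_ord_recl big_ord_recr /= (@stirling2_small _ _ (ltnSn s)) muln0 mulr0n.
rewrite !mul0r mulr0 add0r addr0.
by apply: eq_bigr => j _; rewrite /bump /= natrM mulrCA mulrA.
Qed.

Lemma urnE_expr a d s n m : (0 < a)%N -> (0 < d)%N -> (0 < s)%N ->
  urnE a d n m (fun y => (y%:R : R) ^+ s)
    = \sum_(j < s.+1) (stirling2 s j)%:R * ffact (n%:R : R) j
        / gbinom (m%:R + (a * j)%:R / d%:R) m.
Proof.
move=> a_gt0 d_gt0 s_gt0; rewrite /urnE.
under eq_bigr => k _ do rewrite expr_stirling2 mulr_sumr.
rewrite exchange_big big_ord_recl [RHS]big_ord_recl /=.
rewrite (_ : stirling2 s 0 = 0%N); last by case: s s_gt0.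
rewrite !mul0r big1 => [|k _]; last by rewrite mul0r mulr0.
congr (_ + _); apply: eq_bigr => j _.
by rewrite -mulrA -urnE_ffact // mulr_sumr; apply: eq_bigr => k _; rewrite mulrCA.
Qed.

Definition urn_law_white a d k n m : R :=
  \sum_(k <= l < n.+1) (-1) ^+ (l - k) * ('C(n, l)%:R * 'C(l, k)%:R)
    / gbinom (m%:R + (l * a)%:R / d%:R) m.

Definition urn_law_black a d k n m : R :=
  \sum_(1 <= l < m.+1) (-1) ^+ (l - 1) * ('C(m, l)%:R
    * gbinom ((k%:R - 1) + (l * d)%:R / a%:R) k)
    / gbinom (n%:R + (l * d)%:R / a%:R) n.

Lemma urn_rec_law_white a d k : (0 < d)%N -> urn_rec a d (urn_law_white a d k).
Proof.
move=> d_gt0; apply: urn_rec_sum => [l|l n m nl]; last first.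
  by rewrite bin_small // mulr0n mul0r mulr0 mul0r.
apply: (@urn_rec_quotient a d l).
- by rewrite divr_ge0.
- by rewrite mulnC mulrC divfK // pnatr_eq0 -lt0n.
- move=> n; rewrite mulrCA [RHS]mulrCA; congr (_ * _).
  by rewrite mulrA natr_mul_bin_down mulrA.
Qed.

Lemma urnP_law_white a d k n m : (0 < a)%N -> (0 < d)%N ->
  urnP R a d n m k = urn_law_white a d k n m.
Proof.
move=> a_gt0 d_gt0; move: n m; apply: (@urn_rec_unique a d) => //.
- exact: urn_rec_urnP.
- exact: urn_rec_law_white.
- move=> m; rewrite urnP0m /urn_law_white; case: k => [|k]; last by rewrite big_geq.
  by rewrite big_nat1 mul0n mul0r addr0 gbinom_nn !bin0 !mulr1 divr1.
- move=> n; rewrite urnPn0 /urn_law_white -alt_sum_bin_bin.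
  by apply: eq_bigr => l _; rewrite gbinom0 divr1.
Qed.

Lemma urn_rec_law_black a d k : (0 < a)%N -> urn_rec a d (urn_law_black a d k).
Proof.
move=> a_gt0; apply: (@urn_rec_swap d a (fun m n => urn_law_black a d k n m)).
apply: urn_rec_sum => [l|l m n ml]; last first.
  by rewrite bin_small // mulr0n mul0r mulr0 mul0r.
apply: (@urn_rec_quotient d a l).
- by rewrite divr_ge0.
- by rewrite mulnC mulrC divfK // pnatr_eq0 -lt0n.
- move=> m; rewrite mulrCA [RHS]mulrCA; congr (_ * _).
  by rewrite !mulrA natr_mul_bin_down.
Qed.

Lemma urn_law_black_diag a d n m : (0 < a)%N ->
  (a * n.+1)%:R * urn_law_black a d n.+1 n m.+1 = (d * m.+1)%:R * (m == 0)%:R.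
Proof.
move=> a_gt0; rewrite /urn_law_black big_add1 /= big_mkord -alt_sum_bin !mulr_sumr.
apply: eq_bigr => l _.
have c_ge0 : 0 <= (l.+1 * d)%:R / a%:R :> R by rewrite divr_ge0.
have := @gbinom_shift_gt0 n _ c_ge0.
rewrite -natr1 addrK gbinomSr; set g := gbinom _ n => g_gt0.
have C_succ : 'C(m.+1, l.+1)%:R = m.+1%:R * 'C(m, l)%:R / l.+1%:R :> R.
  by rewrite -natr_mul_bin_diag mulrC mulKf ?pnatr_eq0.
rewrite subn1 /= C_succ addrAC subrr add0r !natrM; field.
by rewrite (gt_eqF g_gt0) !(addrC 1) !natr1 !pnatr_eq0 /= -lt0n a_gt0.
Qed.

Lemma urnP_law_black a d k n m : (0 < a)%N -> (k <= n)%N -> (0 < m)%N ->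
  urnP R a d n m k = urn_law_black a d k n m.
Proof.
move=> a_gt0 kn m_gt0.
(* The formula does not vanish below the diagonal n = k, but its row n = k - 1
   feeds the row n = k exactly like the boundary term [m == 0]
   (urn_law_black_diag). *)
pose G n m := if (n < k)%N then 0
  else urn_law_black a d k n m + ((m == 0%N) && (k == n))%:R.
suff -> : urnP R a d n m k = G n m.
  by rewrite /G ltnNge kn (gtn_eqF m_gt0) addr0.
move: n m {kn m_gt0}; apply: (@urn_rec_unique a d) => //.
- exact: urn_rec_urnP.
- move=> n m; rewrite /G /=.
  case: (ltngtP n.+1 k) => [n1k|kn1|<-].
  + by rewrite !mulr0 addr0.
  + by rewrite andbF /= !addr0; apply: urn_rec_law_black.
  + rewrite andbT !addr0 mulr0 add0r urn_rec_law_black // urn_law_black_diag //.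
    by rewrite mulrDr addrC.
- move=> m; rewrite urnP0m /G {G}; case: k => [|k] //=.
  rewrite /urn_law_black; under eq_bigr => l _ do rewrite !gbinom0 mulr1 divr1.
  by rewrite alt_sum_bin1 andbT subrK.
- move=> n; rewrite urnPn0 /G /urn_law_black big_geq // add0r.
  by case: ltnP => // nk; rewrite gtn_eqF.
Qed.

End UrnLaw.

Theorem corollary1 (R : realFieldType) (a d n m : nat) :
  (0 < a)%N -> (0 < d)%N -> (1 <= n)%N -> (1 <= m)%N ->
  (forall k : nat, (k <= n)%N ->
     urnP R a d n m k =
       \sum_(1 <= l < m.+1)
         (-1) ^+ (l - 1) * ('C(m, l)%:R
           * gbinom ((k%:R - 1) + (l * d)%:R / a%:R) k)
           / gbinom (n%:R + (l * d)%:R / a%:R) n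
     /\
     urnP R a d n m k =
       \sum_(k <= l < n.+1)
         (-1) ^+ (l - k) * ('C(n, l)%:R * 'C(l, k)%:R)
           / gbinom (m%:R + (l * a)%:R / d%:R) m)
  /\
  (forall s : nat, (1 <= s)%N ->
     urnE a d n m (fun y => ffact (y%:R : R) s) =
       ffact (n%:R : R) s / gbinom (m%:R + (a * s)%:R / d%:R) m
     /\
     urnE a d n m (fun y => (y%:R : R) ^+ s) =
       \sum_(0 <= j < s.+1)
         (stirling2 s j)%:R * ffact (n%:R : R) j
           / gbinom (m%:R + (a * j)%:R / d%:R) m).
Proof.
move=> a_gt0 d_gt0 _ m_gt0; split=> [k kn|s s_gt0].
  by split; [apply: urnP_law_black | apply: urnP_law_white].
by rewrite big_mkord; split; [apply: urnE_ffact | apply: urnE_expr].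
Qed.
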